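(* There is an absolute constant $C>0$ such that for every $e_1$-gate graph $G$, $\gamma\big(A(G^{\rm SL})-e_1\big)\ge C\,\gamma\big(A(G)-e_1\big)$.
   Context: For a positive semidefinite matrix $M$, $\gamma(M)$ denotes its smallest nonzero eigenvalue. Let $g_0$ be a fixed $128$-vertex simple graph with vertices labeled $(z,t,j)$, $z\in\{0,1\}$, $t\in[8]$, $j\in\{0,\dots,7\}$, whose adjacency matrix $A(g_0)$ has smallest eigenvalue $e_1=-1-3\sqrt2$, with the corresponding eigenspace having orthonormal basis $|\psi_{z,0}\rangle=\frac{1}{\sqrt8}\big(|z\rangle(|1\rangle+|3\rangle+|5\rangle+|7\rangle)+H|z\rangle(|2\rangle+|8\rangle)+HT|z\rangle(|4\rangle+|6\rangle)\big)|\omega\rangle$ and $|\psi_{z,1}\rangle=|\psi_{z,0}\rangle^*$, where $H=\frac1{\sqrt2}\begin{pmatrix}1&1\\1&-1\end{pmatrix}$, $T=\mathrm{diag}(1,e^{i\pi/4})$, $|\omega\rangle=\frac1{\sqrt8}\sum_{j=0}^7 e^{-i\pi j/4}|j\rangle$. A gate diagram consists of $R$ diagram elements $q\in[R]$, each with a label $U_q\in\{1,H,HT\}$ and node set $\{(q,z,t): z\in\{0,1\},\ t\in\{1,3\}\cup T(U_q)\}$, where $T(H)=\{2,8\}$, $T(HT)=\{4,6\}$, $T(1)=\{5,7\}$; together with a set $\mathcal S$ of nodes and a set $\mathcal E$ of unordered pairs of nodes, such that each node belongs to at most one element of $\mathcal S$ or pair of $\mathcal E$. The associated gate graph $G$ has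 vertices $(q,z,t,j)$ and adjacency matrix $A(G)=1_q\otimes A(g_0)+h_{\mathcal S}+h_{\mathcal E}$, with $h_{\mathcal S}=\sum_{(q,z,t)\in\mathcal S}|q,z,t\rangle\langle q,z,t|\otimes 1_j$ and $h_{\mathcal E}=\sum_{\{(q,z,t),(q',z',t')\}\in\mathcal E}(|q,z,t\rangle+|q',z',t'\rangle)(\langle q,z,t|+\langle q',z',t'|)\otimes 1_j$. $G$ is an $e_1$-gate graph if the smallest eigenvalue of $A(G)$ equals $e_1$. Let $\mathcal N=\{(q,z,t,j): (q,z,t)\notin\mathcal S \text{ and } (q,z,t) \text{ belongs to no pair in } \mathcal E\}$, $\Pi_{\mathcal N}=\sum_{v\in\mathcal N}|v\rangle\langle v|$, and $\Pi_+=|+\rangle\langle+|$ with $|+\rangle=\frac1{\sqrt2}(|0\rangle+|1\rangle)$. The graph $G^{\rm SL}$ has vertex set $V(G)\times\{0,1\}$ and adjacency matrix $A(G^{\rm SL})=A(G)\otimes 1_d+2\,\Pi_{\mathcal N}\otimes\Pi_+$. *)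

From HB Require Import structures.
From mathcomp Require Import all_boot all_order all_algebra all_field.
Set Implicit Arguments. Unset Strict Implicit. Unset Printing Implicit Defensive.
Import Order.TTheory GRing.Theory Num.Theory.
Local Open Scope ring_scope.

(* Matrices indexed by an arbitrary finite type V, transported to 'M_#|V|
   via the canonical enumeration of V. *)
Definition fmx (V : finType) (f : V -> V -> algC) : 'M[algC]_#|V| :=
  \matrix_(i, j) f (enum_val i) (enum_val j).

Definition smallest_eig n (M : 'M[algC]_n) (a : algC) : Prop :=
  eigenvalue M a /\ forall b, eigenvalue M b -> a <= b.

Definition is_gamma n (M : 'M[algC]_n) (g : algC) : Prop :=
  [/\ eigenvalue M g, g != 0 & forall b, eigenvalue M b -> b != 0 -> g <= b].

Definition e1 : algC := -1 - 3%:R * sqrtC 2%:R.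

(* vertices (z,t,j) of g_0; the label t in [8] = {1,...,8} is encoded by
   t' : 'I_8 with t = t'.+1 *)
Definition V0 : finType := ('I_2 * 'I_8 * 'I_8)%type.

(* zeta = e^{i pi/4} *)
Definition zeta : algC := (1 + 'i) / sqrtC 2%:R.

Definition Hent (a b : 'I_2) : algC :=
  (if (val a == 1%N) && (val b == 1%N) then -1 else 1) / sqrtC 2%:R.
Definition Tent (b : 'I_2) : algC := if val b == 1%N then zeta else 1.
Definition HTent (a b : 'I_2) : algC := Hent a b * Tent b.

Definition omega (j : 'I_8) : algC := (zeta^* ^+ j) / sqrtC 8%:R.

Definition psi0 (z : 'I_2) (v : V0) : algC :=
  let: (z', t, j) := v in
  let tl := (val t).+1 in
  let c := if tl \in [:: 1; 3; 5; 7]%N then (if z' == z then 1 else 0)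
           else if tl \in [:: 2; 8]%N then Hent z' z
           else HTent z' z in
  c / sqrtC 8%:R * omega j.

Definition psi1 (z : 'I_2) (v : V0) : algC := (psi0 z v)^*.

Definition psi_mx : 'M[algC]_(4, #|V0|) :=
  \matrix_(k < 4, i < #|V0|) let v := enum_val i in
     match val k with
     | 0 => psi0 0 v | 1 => psi0 1 v | 2 => psi1 0 v | _ => psi1 1 v end.

Definition adjmx (V : finType) (e : rel V) : 'M[algC]_#|V| :=
  fmx (fun x y => (e x y)%:R).

Inductive glabel := L1 | LH | LHT.

(* the set {1,3} u T(U), on labels t in [8] *)
Definition tset (u : glabel) : seq nat :=
  match u with
  | LH => [:: 1; 3; 2; 8]%N
  | LHT => [:: 1; 3; 4; 6]%N
  | L1 => [:: 1; 3; 5; 7]%N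
  end.

(* triples (q,z,t); t encoded as 'I_8 with label (val t).+1 *)
Definition Trip (R : nat) : finType := ('I_R * 'I_2 * 'I_8)%type.

Definition is_node R (U : 'I_R -> glabel) (x : Trip R) : bool :=
  let: (q, z, t) := x in ((val t).+1 \in tset (U q)).

Definition gate_diagram R (U : 'I_R -> glabel) (S : {set Trip R})
    (E : {set {set Trip R}}) : Prop :=
  [/\ forall x, x \in S -> is_node U x,
      forall e, e \in E -> #|e| = 2%N /\ (forall x, x \in e -> is_node U x)
    & forall x, ((x \in S) + #|[set e in E | x \in e]| <= 1)%N].

Definition VG (R : nat) : finType := ('I_R * V0)%type.

Definition trip_of R (v : VG R) : Trip R :=
  let: (q, (z, t, j)) := v in (q, z, t).
Definition jof R (v : VG R) : 'I_8 := let: (q, (z, t, j)) := v in j.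

(* A(G) = 1_q (x) A(g0) + h_S + h_E *)
Definition AG_fun R (A0 : rel V0) (S : {set Trip R}) (E : {set {set Trip R}})
    (v w : VG R) : algC :=
  (if v.1 == w.1 then (A0 v.2 w.2)%:R else 0)
  + (if jof v == jof w then
       (if (trip_of v == trip_of w) && (trip_of v \in S) then 1 else 0)
       + #|[set e in E | (trip_of v \in e) && (trip_of w \in e)]|%:R
     else 0).

Definition AG R (A0 : rel V0) S E : 'M[algC]_#|VG R| := fmx (@AG_fun R A0 S E).

Definition inN R (S : {set Trip R}) (E : {set {set Trip R}}) (v : VG R) : bool :=
  (trip_of v \notin S) && [forall e in E, trip_of v \notin e].

Definition VSL (R : nat) : finType := (VG R * 'I_2)%type.

(* A(G^SL) = A(G) (x) 1_2 + 2 Pi_N (x) Pi_+, Pi_+ = |+><+| *)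
Definition ASL_fun R (A0 : rel V0) S E (v w : VSL R) : algC :=
  (if v.2 == w.2 then AG_fun A0 S E v.1 w.1 else 0)
  + (if (v.1 == w.1) && inN S E v.1 then 2%:R * (1 / 2%:R) else 0).

Definition ASL R (A0 : rel V0) S E : 'M[algC]_#|VSL R| :=
  fmx (@ASL_fun R A0 S E).

From HB Require Import structures.
From mathcomp Require Import all_boot all_order all_algebra all_field.
From mathcomp Require Import ring.
Import Order.TTheory GRing.Theory Num.Theory.
Set Implicit Arguments. Unset Strict Implicit. Unset Printing Implicit Defensive.
Local Open Scope ring_scope.
Local Open Scope sesquilinear_scope.

(* On V(G) x {0,1}, A(G^SL) - e1 = M (x) 1 + Pi_N (x) J with M := A(G) - e1
   and J the all-ones 2x2 matrix, so its eigenvectors split into antisymmetric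
   ones, with eigenvalues of M (hence >= gamma(M)), and symmetric ones, with
   eigenvalues of M + 2 Pi_N.  For the latter write the eigenvector as x = a + r
   with a in ker M and r orthogonal to ker M: the form of M is at least
   gamma(M) |r|^2, and 2 <x, Pi_N x> >= <a, Pi_N a> - 2 |r|^2.  On every diagram
   element a vector of ker M lies in the span of the psi's, and there each entry
   at a node is a Hadamard combination of two entries at non-nodes, which are in
   N; hence |a|^2 <= 128 <a, Pi_N a>.  Since gamma(M) <= 16 (test vector
   e_(q,z,t,0) + e_(q,z,t,4)), combining the two bounds gives the constant
   1/2305. *)

Lemma trmxC_mul m n p (A : 'M[algC]_(m, n)) (B : 'M[algC]_(n, p)) :
  (A *m B)^t* = B^t* *m A^t*.
Proof. by rewrite trmx_mul map_mxM. Qed.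

Lemma hermitian_unitary_diag n (A : 'M[algC]_n) : A^t* = A ->
  exists P : 'M_n, exists2 d : 'rV_n,
    [/\ P *m P^t* = 1%:M, P^t* *m P = 1%:M & A = P^t* *m diag_mx d *m P]
    & forall i, eigenvalue A (d 0 i).
Proof.
move=> hermA.
have /orthomx_spectralP defA : A \is normalmx.
  by apply/normalmxP; rewrite hermA.
have PPt : spectralmx A *m (spectralmx A)^t* = 1%:M.
  exact/unitarymxP/spectral_unitarymx.
have invP : invmx (spectralmx A) = (spectralmx A)^t*.
  exact/invmx_unitary/spectral_unitarymx.
move: defA PPt invP; set P := spectralmx A; set d := spectral_diag A.
move=> defA PPt invP; exists P, d.
  by split=> //; rewrite -invP ?mulVmx ?spectral_unit // -invP.
move=> i; apply/eigenvalueP; exists (row i P).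
  rewrite -row_mul {1}defA invP !mulmxA PPt mul1mx mul_diag_mx.
  by apply/rowP => j; rewrite !mxE.
apply/negP => /eqP rowi0.
have := congr1 (fun x => (x *m P^t*) 0 i) rowi0.
by rewrite -row_mul PPt mul0mx !mxE eqxx /= => /eqP; rewrite oner_eq0.
Qed.

Lemma qform_diag n (P : 'M[algC]_n) (d x : 'rV[algC]_n) :
  (x *m (P^t* *m diag_mx d *m P) *m x^t*) 0 0 =
  \sum_i d 0 i * ((x *m P^t*) 0 i * ((x *m P^t*) 0 i)^*).
Proof.
have -> : x *m (P^t* *m diag_mx d *m P) *m x^t* =
          (x *m P^t*) *m diag_mx d *m (x *m P^t*)^t*.
  by rewrite trmxC_mul trmxCK !mulmxA.
rewrite mxE; apply: eq_bigr => i _.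
by rewrite mul_mx_diag !mxE; ring.
Qed.

Section PsdForms.
Variables (n : nat) (A : 'M[algC]_n).
Hypothesis hermA : A^t* = A.

Lemma psd_qform_ge0 (x : 'rV_n) : (forall b, eigenvalue A b -> 0 <= b) ->
  0 <= (x *m A *m x^t*) 0 0.
Proof.
move=> psdA; have [P [d [_ _ defA] dA]] := hermitian_unitary_diag hermA.
rewrite defA qform_diag; apply: sumr_ge0 => i _.
by rewrite mulr_ge0 ?mul_conjC_ge0 ?psdA.
Qed.

Lemma psd_qform_eq0 (x : 'rV_n) : (forall b, eigenvalue A b -> 0 <= b) ->
  (x *m A *m x^t*) 0 0 = 0 -> x *m A = 0.
Proof.
move=> psdA; have [P [d [PPt PtP defA] dA]] := hermitian_unitary_diag hermA.
set c := x *m P^t*.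
have terms_ge0 i : 0 <= d 0 i * (c 0 i * (c 0 i)^*).
  by rewrite mulr_ge0 ?mul_conjC_ge0 ?psdA.
rewrite defA qform_diag -/c => /(psumr_eq0P (fun i _ => terms_ge0 i)) dc0.
have dc i : d 0 i * c 0 i = 0.
  have /eqP := dc0 i isT.
  rewrite mulf_eq0 mul_conjC_eq0 => /orP[] /eqP->; by rewrite ?mul0r ?mulr0.
have -> : x = c *m P by rewrite /c -mulmxA PtP mulmx1.
rewrite !mulmxA -(mulmxA c) PPt mulmx1 mul_mx_diag.
have -> : \matrix_(i, j) (c i j * d 0 j) = 0 :> 'rV_n.
  by apply/rowP => j; rewrite [LHS]mxE mulrC [RHS]mxE dc.
by rewrite mul0mx.
Qed.

Lemma psd_gap_split (g : algC) (x : 'rV_n) : 0 <= g ->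
  (forall b, eigenvalue A b -> b != 0 -> g <= b) ->
  exists2 a : 'rV_n, a *m A = 0 &
    (a *m (x - a)^t*) 0 0 = 0 /\
    g * ((x - a) *m (x - a)^t*) 0 0 <= (x *m A *m x^t*) 0 0.
Proof.
move=> g0 gapA; have [P [d [PPt PtP defA] dA]] := hermitian_unitary_diag hermA.
set c := x *m P^t*.
pose c0 : 'rV_n := \row_i (if d 0 i == 0 then c 0 i else 0).
have xc : x = c *m P by rewrite /c -mulmxA PtP mulmx1.
have xa : x - c0 *m P = (c - c0) *m P by rewrite xc mulmxBl.
have unitary_dot (u v : 'rV_n) : (u *m P *m (v *m P)^t*) 0 0 = (u *m v^t*) 0 0.
  by rewrite trmxC_mul mulmxA -(mulmxA u) PPt mulmx1.
exists (c0 *m P); [|split].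
- rewrite defA !mulmxA -(mulmxA c0) PPt mulmx1 mul_mx_diag.
  have -> : \matrix_(i, j) (c0 i j * d 0 j) = 0 :> 'rV_n.
    by apply/rowP => j; rewrite !mxE; case: eqP => [->|]; rewrite ?mulr0 ?mul0r.
  by rewrite mul0mx.
- rewrite xa unitary_dot mxE big1 // => i _; rewrite !mxE.
  by case: eqP; rewrite ?subr0 ?subrr ?mul0r // rmorph0 mulr0.
- rewrite xa unitary_dot defA qform_diag -/c mxE mulr_sumr.
  apply: ler_sum => i _; rewrite !mxE.
  case: eqP => [->|/eqP dnz]; first by rewrite subrr rmorph0 !mul0r mulr0.
  by rewrite subr0 ler_wpM2r ?mul_conjC_ge0 ?gapA.
Qed.

End PsdForms.

Lemma normCD_sqr_le (a b : algC) :
  `|a + b| ^+ 2 <= 2%:R * (`|a| ^+ 2 + `|b| ^+ 2).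
Proof.
rewrite -subr_ge0 !normCK.
have -> : 2%:R * (a * a^* + b * b^*) - (a + b) * (a + b)^* = (a - b) * (a - b)^*.
  by rewrite !rmorphD rmorphN /=; ring.
exact: mul_conjC_ge0.
Qed.

Lemma sum_mul_delta (V : finType) (F G : V -> algC) w :
  \sum_v F v * ((v == w)%:R * G v) = F w * G w.
Proof.
rewrite (bigD1 w) //= eqxx mul1r big1 ?addr0 // => v /negbTE->.
by rewrite mul0r mulr0.
Qed.

Lemma sum_pair (I J : finType) (F : I * J -> algC) :
  \sum_p F p = \sum_i \sum_j F (i, j).
Proof. by rewrite pair_bigA; apply: eq_bigr => -[]. Qed.

Lemma sum_I2 (F : 'I_2 -> algC) : \sum_s F s = F ord0 + F (lift ord0 ord0).
Proof. by rewrite !big_ord_recl big_ord0 addr0. Qed.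

Lemma eigenvalue_sub_scalar n (A : 'M[algC]_n) e b :
  eigenvalue (A - e%:M) b = eigenvalue A (b + e).
Proof.
rewrite /eigenvalue /eigenspace.
suff -> : A - e%:M - b%:M = A - (b + e)%:M by [].
by apply/matrixP => i j; rewrite !mxE mulrnDl opprD addrA [_ - _ *+ _ - _]addrAC.
Qed.

Lemma smallest_eig_shift_ge0 n (A : 'M[algC]_n) e b :
  smallest_eig A e -> eigenvalue (A - e%:M) b -> 0 <= b.
Proof.
by case=> _ e_min; rewrite eigenvalue_sub_scalar => /e_min; rewrite lerDr.
Qed.

Section FunctionVectors.
Variable V : finType.
Implicit Types (f g : V -> algC) (M : V -> V -> algC).

Definition rowf f : 'rV[algC]_#|V| := \row_i f (enum_val i).
Definition frow (x : 'rV[algC]_#|V|) (v : V) : algC := x 0 (enum_rank v).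

Definition fdot f g := \sum_v f v * (g v)^*.
Definition hform M f := \sum_w (\sum_v f v * M v w) * (f w)^*.

Lemma frowK x : rowf (frow x) = x.
Proof. by apply/rowP => i; rewrite !mxE /frow enum_valK. Qed.

Lemma rowfK f v : frow (rowf f) v = f v.
Proof. by rewrite /frow mxE enum_rankK. Qed.

Lemma sum_enum_rank (F : 'I_#|V| -> algC) : \sum_i F i = \sum_v F (enum_rank v).
Proof. by rewrite (reindex enum_rank) //; apply/onW_bij/enum_rank_bij. Qed.

Lemma rowf_mul f M : rowf f *m fmx M = rowf (fun w => \sum_v f v * M v w).
Proof.
apply/rowP => j; rewrite !mxE sum_enum_rank; apply: eq_bigr => v _.
by rewrite !mxE enum_rankK.
Qed.

Lemma rowf_dot f g : (rowf f *m (rowf g)^t*) 0 0 = fdot f g.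
Proof.
by rewrite mxE sum_enum_rank; apply: eq_bigr => v _; rewrite !mxE enum_rankK.
Qed.

Lemma rowf_qform f M : (rowf f *m fmx M *m (rowf f)^t*) 0 0 = hform M f.
Proof. by rewrite rowf_mul rowf_dot. Qed.

Lemma rowf_eq0 f : (rowf f == 0) = [forall v, f v == 0].
Proof.
apply/eqP/forallP => [f0 v|f0]; first by rewrite -(rowfK f) f0 /frow mxE.
by apply/rowP => i; rewrite !mxE; apply/eqP.
Qed.

Lemma eigenvalue_fmxP M b :
  reflect (exists2 f, [exists v, f v != 0] &
             forall w, \sum_v f v * M v w = b * f w)
          (eigenvalue (fmx M) b).
Proof.
apply: (iffP eigenvalueP) => [[x xM xn0] | [f fn0 fM]].
  exists (frow x); first by rewrite -rowf_eq0 frowK.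
  move=> w; have := congr1 (frow ^~ w) xM.
  by rewrite -[X in X *m _]frowK rowf_mul rowfK => ->; rewrite /frow mxE.
exists (rowf f); last by rewrite rowf_eq0 negb_forall.
by rewrite rowf_mul; apply/rowP => i; rewrite !mxE fM.
Qed.

Lemma fmx_sub_scalar M c :
  fmx M - c%:M = fmx (fun v w => M v w - (v == w)%:R * c).
Proof.
apply/matrixP => i j; rewrite !mxE (inj_eq enum_val_inj) mulr_natl.
by case: eqP.
Qed.

Lemma hform_gram_ge0 (K : finType) (key : K -> V -> bool) M f :
  (forall v w, M v w = \sum_k (key k v && key k w)%:R) -> 0 <= hform M f.
Proof.
move=> ME; rewrite /hform.
have -> : \sum_w (\sum_v f v * M v w) * (f w)^* =
    \sum_k (\sum_v f v * (key k v)%:R) * (\sum_w f w * (key k w)%:R)^*.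
  transitivity (\sum_w \sum_v \sum_k
                 f v * (key k v)%:R * (f w * (key k w)%:R)^*).
    apply: eq_bigr => w _; rewrite mulr_suml; apply: eq_bigr => v _.
    rewrite ME mulr_sumr mulr_suml; apply: eq_bigr => k _.
    rewrite rmorphM rmorph_nat /=.
    by case: (key k v); case: (key k w); rewrite ?mulr0 ?mul0r ?mulr1.
  rewrite exchange_big; under eq_bigr do rewrite exchange_big.
  rewrite exchange_big; apply: eq_bigr => k _.
  rewrite rmorph_sum mulr_suml; apply: eq_bigr => v _.
  by rewrite mulr_sumr.
by apply: sumr_ge0 => k _; apply: mul_conjC_ge0.
Qed.

Lemma hformD M M1 M2 f : (forall v w, M v w = M1 v w + M2 v w) ->
  hform M f = hform M1 f + hform M2 f.
Proof.
move=> ME; rewrite /hform -big_split /=; apply: eq_bigr => w _.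
by rewrite -mulrDl -big_split /=; congr (_ * _); apply: eq_bigr => v _; rewrite ME mulrDr.
Qed.

Variable M : V -> V -> algC.
Hypothesis hermM : forall v w, (M w v)^* = M v w.

Lemma fmx_hermitian : (fmx M)^t* = fmx M.
Proof. by apply/matrixP => i j; rewrite !mxE hermM. Qed.

Lemma hform_ge0 f : (forall b, eigenvalue (fmx M) b -> 0 <= b) ->
  0 <= hform M f.
Proof. by move=> psdM; rewrite -rowf_qform psd_qform_ge0 ?fmx_hermitian. Qed.

Lemma hform_eq0 f : (forall b, eigenvalue (fmx M) b -> 0 <= b) ->
  hform M f = 0 -> forall w, \sum_v f v * M v w = 0.
Proof.
move=> psdM; rewrite -rowf_qform => /(psd_qform_eq0 fmx_hermitian psdM).
by rewrite rowf_mul => /eqP; rewrite rowf_eq0 => /forallP w0 w; apply/eqP.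
Qed.

Lemma hform_gap_split (gap : algC) f : 0 <= gap ->
  (forall b, eigenvalue (fmx M) b -> b != 0 -> gap <= b) ->
  exists2 a, forall w, \sum_v a v * M v w = 0 &
    fdot a (fun v => f v - a v) = 0 /\
    gap * fdot (fun v => f v - a v) (fun v => f v - a v) <= hform M f.
Proof.
move=> gap0 gapM.
have [a aM [a_perp bound]] := @psd_gap_split _ _ fmx_hermitian _ (rowf f) gap0 gapM.
have rowf_sub : rowf f - a = rowf (fun v => f v - frow a v).
  by apply/rowP => i; rewrite !mxE /frow enum_valK.
exists (frow a).
  move=> w; have := congr1 (frow ^~ w) aM.
  by rewrite -[X in X *m _]frowK rowf_mul rowfK => ->; rewrite /frow mxE.
by rewrite -!rowf_dot -rowf_qform frowK -rowf_sub.
Qed.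

Lemma fdot_normE f : fdot f f = \sum_v `|f v| ^+ 2.
Proof. by apply: eq_bigr => v _; rewrite normCK. Qed.

Lemma fdot_pythagoras a f : fdot a (fun v => f v - a v) = 0 ->
  fdot f f = fdot a a + fdot (fun v => f v - a v) (fun v => f v - a v).
Proof.
rewrite /fdot => a_perp.
have perp_a : \sum_v (f v - a v) * (a v)^* = 0.
  apply/eqP; rewrite -conjC_eq0 rmorph_sum /=; apply/eqP; rewrite -[RHS]a_perp.
  by apply: eq_bigr => v _; rewrite rmorphM /= conjCK mulrC.
transitivity (\sum_v (a v * (a v)^* + (f v - a v) * (f v - a v)^*) +
  (\sum_v a v * (f v - a v)^* + \sum_v (f v - a v) * (a v)^*)).
  by rewrite -!big_split; apply: eq_bigr => v _ /=; rewrite rmorphB; ring.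
by rewrite a_perp perp_a !addr0 big_split.
Qed.

Lemma hform_gap_perp (gap : algC) f : 0 <= gap ->
  (forall b, eigenvalue (fmx M) b -> b != 0 -> gap <= b) ->
  (forall a, (forall w, \sum_v a v * M v w = 0) -> fdot f a = 0) ->
  gap * fdot f f <= hform M f.
Proof.
move=> gap0 gapM f_perp.
have [a a_ker [a_perp gap_le]] := hform_gap_split f gap0 gapM.
suff <- : fdot (fun v => f v - a v) (fun v => f v - a v) = fdot f f by [].
have fa0 := f_perp a a_ker; move: a_perp fa0; rewrite /fdot => a_perp fa0.
transitivity (\sum_v f v * (f v - a v)^* - \sum_v a v * (f v - a v)^*).
  by rewrite -sumrB; apply: eq_bigr => v _; rewrite mulrBl.
rewrite a_perp subr0; under eq_bigr do rewrite rmorphB mulrBr /=.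
by rewrite sumrB fa0 subr0.
Qed.

Lemma hform_gap_two_point (gap : algC) v1 v2 : v1 != v2 -> 0 <= gap ->
  (forall b, eigenvalue (fmx M) b -> b != 0 -> gap <= b) ->
  (forall a, (forall w, \sum_v a v * M v w = 0) -> a v2 = - a v1) ->
  gap *+ 2 <= M v1 v1 + M v2 v1 + (M v1 v2 + M v2 v2).
Proof.
move=> v12 gap0 gapM ker_antisym.
have v21 : (v2 == v1) = false by rewrite eq_sym (negbTE v12).
pose y w : algC := ((w == v1) || (w == v2))%:R.
have sum_y F : \sum_w y w * F w = F v1 + F v2.
  rewrite (bigD1 v1) //= (bigD1 v2) /=; last by rewrite v21.
  rewrite /y !eqxx v21 orbT big1 ?addr0 ?mul1r //.
  by move=> w /andP[/negbTE-> /negbTE->]; rewrite mul0r.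
have y_real w : (y w)^* = y w by rewrite rmorph_nat.
have y_perp a : (forall w, \sum_v a v * M v w = 0) -> fdot y a = 0.
  by move=> a_ker; rewrite /fdot sum_y ker_antisym // rmorphN /= addrN.
have := hform_gap_perp gap0 gapM y_perp.
have y1 : y v1 = 1 by rewrite /y eqxx.
have y2 : y v2 = 1 by rewrite /y eqxx orbT.
rewrite /fdot sum_y !y_real y1 y2 -mulr2n mulr_natr => /le_trans; apply.
rewrite /hform (eq_bigr (fun w => y w * \sum_v y v * M v w)); last first.
  by move=> w _; rewrite mulrC y_real.
by rewrite sum_y !sum_y.
Qed.

End FunctionVectors.

Lemma hform_eigen_diag (V : finType) (M : V -> V -> algC) (D : V -> algC) b x :
  (forall w, \sum_v x v * (M v w + (v == w)%:R * D v) = b * x w) ->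
  hform M x + \sum_w D w * `|x w| ^+ 2 = b * \sum_w `|x w| ^+ 2.
Proof.
move=> x_eig; rewrite /hform mulr_sumr -big_split /=; apply: eq_bigr => w _.
have xw : \sum_v x v * M v w + x w * D w = b * x w.
  rewrite -(sum_mul_delta x D w) -big_split -x_eig.
  by apply: eq_bigr => v _; rewrite [RHS]mulrDr.
by rewrite (canRL (addrK _) xw) normCK; ring.
Qed.

Lemma indicator_mass_le (V : finType) (N : pred V) (a x : V -> algC) :
  (\sum_v (N v)%:R * `|a v| ^+ 2) / 2%:R - \sum_v `|x v - a v| ^+ 2 <=
  \sum_v (N v)%:R * `|x v| ^+ 2.
Proof.
apply: le_trans (_ : _ <= \sum_v ((N v)%:R * `|a v| ^+ 2 / 2%:R
                                  - (N v)%:R * `|x v - a v| ^+ 2)) _.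
  rewrite sumrB mulr_suml lerD2l lerN2; apply: ler_sum => v _.
  by case: (N v); rewrite ?mul1r ?mul0r ?exprn_ge0.
apply: ler_sum => v _; case: (N v); rewrite ?mul0r ?subrr // !mul1r.
rewrite lerBlDr ler_pdivrMr ?ltr0n // mulrC.
have {1}-> : a v = x v + - (x v - a v) by rewrite opprB addrC subrK.
by apply: le_trans (normCD_sqr_le _ _) _; rewrite normrN.
Qed.

Lemma hform_blockdiag (I V : finType) (B : V -> V -> algC) (f : I * V -> algC) :
  hform (fun v w => (v.1 == w.1)%:R * B v.2 w.2) f =
  \sum_i hform B (fun v => f (i, v)).
Proof.
rewrite /hform sum_pair; apply: eq_bigr => i _; apply: eq_bigr => w _.
congr (_ * _); rewrite sum_pair (bigD1 i) //= [X in _ + X]big1 ?addr0.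
  by apply: eq_bigr => v _; rewrite eqxx mul1r.
by move=> i' /negbTE ni; apply: big1 => v _; rewrite ni mul0r mulr0.
Qed.

Lemma doubled_eigenvalue (V : finType) (M : V -> V -> algC) (D : V -> algC)
    (M2 : V * 'I_2 -> V * 'I_2 -> algC) b :
  (forall v s w s', M2 (v, s) (w, s') = (s == s')%:R * M v w + (v == w)%:R * D v) ->
  eigenvalue (fmx M2) b ->
  eigenvalue (fmx M) b \/
  eigenvalue (fmx (fun v w => M v w + (v == w)%:R * (2%:R * D v))) b.
Proof.
move=> M2E /eigenvalue_fmxP[f fn0 fM2].
pose s1 : 'I_2 := lift ord0 ord0.
have sheet w s' : \sum_v f (v, s') * M v w + D w * (f (w, ord0) + f (w, s1)) =
                  b * f (w, s').
  rewrite -fM2 sum_pair.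
  under [RHS]eq_bigr => v _ do under eq_bigr => s _ do rewrite M2E mulrDr.
  under [RHS]eq_bigr do rewrite big_split /=.
  rewrite big_split /=; congr (_ + _).
    by apply: eq_bigr => v _; rewrite sum_mul_delta.
  rewrite (bigD1 w) //= [X in _ = _ + X]big1 ?addr0; last first.
    by move=> v /negbTE vw; apply: big1 => s _; rewrite vw mul0r mulr0.
  by rewrite sum_I2 eqxx /=; ring.
(* f(.,0) - f(.,1) and f(.,0) + f(.,1) decouple the two sheets. *)
have [xm_n0 | xm_0] := boolP [exists v, f (v, ord0) - f (v, s1) != 0].
  left; apply/eigenvalue_fmxP; exists (fun v => f (v, ord0) - f (v, s1)) => // w.
  under eq_bigr do rewrite mulrBl.
  rewrite sumrB (canRL (addrK _) (sheet w ord0)) (canRL (addrK _) (sheet w s1)).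
  by ring.
right; apply/eigenvalue_fmxP; exists (fun v => f (v, ord0) + f (v, s1)).
  apply: contraNT fn0; rewrite !negb_exists => /forallP xp0.
  move: xm_0; rewrite negb_exists => /forallP xm0.
  apply/forallP => -[v s]; apply/negPn.
  move: (xm0 v) (xp0 v); rewrite !negbK subr_eq0 => /eqP f01.
  rewrite f01 -mulr2n mulrn_eq0 /= => /eqP f1.
  have s01 : s = ord0 \/ s = s1.
    by case: s => -[|[|//]] ?; [left|right]; apply: val_inj.
  by case: s01 => ->; rewrite ?f01 f1.
move=> w; under eq_bigr do rewrite mulrDr.
rewrite big_split /= sum_mul_delta [RHS]mulrDr -(sheet w ord0) -(sheet w s1).
under eq_bigr do rewrite mulrDl.
by rewrite big_split /=; ring.
Qed.

Lemma sqrtC2_gt0 : 0 < sqrtC 2%:R :> algC.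
Proof. by rewrite sqrtC_gt0 ltr0n. Qed.

Lemma sqrtC2_conj : (sqrtC 2%:R)^* = sqrtC 2%:R :> algC.
Proof. exact/conj_Creal/gtr0_real/sqrtC2_gt0. Qed.

Lemma sqrtC2_le2 : sqrtC 2%:R <= 2%:R :> algC.
Proof.
rewrite -[leRHS](@sqrCK _ 2%:R) ?ler0n // ler_sqrtC ?nnegrE ?exprn_ge0 //.
by rewrite expr2 ler_peMr ?ler1n.
Qed.

Lemma mul_divsqrtC2 (a b : algC) :
  a / sqrtC 2%:R * (b / sqrtC 2%:R) = a * b / 2%:R.
Proof. by rewrite mulf_div -expr2 sqrtCK. Qed.

Lemma e1_conj : e1^* = e1.
Proof.
apply/conj_Creal; rewrite /e1 rpredB ?rpredN ?rpred1 // rpredM ?rpred_nat //.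
exact/gtr0_real/sqrtC2_gt0.
Qed.

Lemma conj_zetaE : zeta^* = (1 - 'i) / sqrtC 2%:R.
Proof. by rewrite rmorphM fmorphV rmorphD /= rmorph1 conjCi sqrtC2_conj. Qed.

Lemma conj_zeta_expr4 : zeta^* ^+ 4 = -1.
Proof.
have zeta2 : zeta^* ^+ 2 = - 'i.
  rewrite conj_zetaE expr2 mul_divsqrtC2.
  apply: (mulIf (_ : 2%:R != 0)); rewrite ?pnatr_eq0 // mulfVK ?pnatr_eq0 //.
  by rewrite -expr2 sqrrB sqrCi; ring.
by rewrite (exprM _ 2 2) zeta2 sqrrN sqrCi.
Qed.

Lemma conj_zeta_expr8 : zeta^* ^+ 8 = 1.
Proof. by rewrite (exprM _ 4 2) conj_zeta_expr4 sqrrN expr1n. Qed.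

Lemma zeta_conj_expr7 : zeta^* ^+ 7 = zeta.
Proof.
have zeta_unit : zeta * zeta^* = 1.
  rewrite conj_zetaE /zeta mul_divsqrtC2.
  apply: (mulIf (_ : 2%:R != 0)); rewrite ?pnatr_eq0 // mulfVK ?pnatr_eq0 //.
  by rewrite mulrC -subr_sqr expr1n sqrCi; ring.
by rewrite -[LHS]mul1r -zeta_unit -mulrA -exprS conj_zeta_expr8 mulr1.
Qed.

Lemma Hent_conj a b : (Hent a b)^* = Hent a b.
Proof.
rewrite /Hent rmorphM fmorphV /= sqrtC2_conj.
by case: ifP; rewrite ?rmorphN rmorph1.
Qed.

Lemma normC2_Hent a b : `|Hent a b| ^+ 2 = 2%:R^-1.
Proof.
rewrite normCK Hent_conj /Hent mul_divsqrtC2.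
by case: ifP => _; rewrite ?mulrNN !mul1r.
Qed.

Lemma Hent_involutive z z' : \sum_y Hent z y * Hent y z' = (z == z')%:R.
Proof.
rewrite !big_ord_recl big_ord0 addr0 /Hent !mul_divsqrtC2.
case: z => -[|[|//]] ?; case: z' => -[|[|//]] ? /=;
  apply: (mulIf (_ : 2%:R != 0));
  rewrite ?pnatr_eq0 ?mul0r -?mulrDl ?mulfVK ?pnatr_eq0 //; ring.
Qed.

Definition phase_shift (y : 'I_2) (j : 'I_8) : 'I_8 := inZp (j + 8 - y).

Lemma Tent_omega y j : Tent y * omega j = omega (phase_shift y j).
Proof.
rewrite /Tent /omega /phase_shift /=; case: y => -[|[|//]] ? /=.
  by rewrite mul1r subn0 modnDr modn_small.
rewrite mulrA -{1}zeta_conj_expr7 -exprD -addnBA // (addnC j).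
by rewrite (expr_mod _ conj_zeta_expr8).
Qed.

(* The label t of [8] is encoded by t - 1 : 'I_8, as in Trip. *)
Definition label2 : 'I_8 := Ordinal (isT : 1 < 8)%N.
Definition label5 : 'I_8 := Ordinal (isT : 4 < 8)%N.
Definition phase0 : 'I_8 := Ordinal (isT : 0 < 8)%N.
Definition phase4 : 'I_8 := Ordinal (isT : 4 < 8)%N.

Lemma sum_Hent_delta z' z (c : 'I_2 -> algC) :
  \sum_y Hent z' y * ((if y == z then 1 else 0) * c y) = Hent z' z * c z.
Proof.
rewrite (bigD1 z) //= eqxx mul1r big1 ?addr0 // => y /negbTE->.
by rewrite mul0r mulr0.
Qed.

Lemma psi0_odd_label z z' t j : (val t).+1 \in [:: 1; 3; 5; 7]%N ->
  psi0 z (z', t, j) = psi0 z (z', label5, j).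
Proof. by move=> ht; rewrite /psi0 ht. Qed.

Lemma psi0_H_label z z' t j : (val t).+1 \in [:: 2; 8]%N ->
  psi0 z (z', t, j) = \sum_y Hent z' y * psi0 z (y, label5, j).
Proof.
move=> ht; have /negbTE t_even : (val t).+1 \notin [:: 1; 3; 5; 7]%N.
  by move: ht; rewrite !inE => /orP[] /eqP->.
rewrite /psi0 t_even ht /=.
under eq_bigr do rewrite -mulrA.
by rewrite sum_Hent_delta mulrA.
Qed.

Lemma psi0_HT_label z z' t j : (val t).+1 \in [:: 4; 6]%N ->
  psi0 z (z', t, j) = \sum_y Hent z' y * psi0 z (y, label5, phase_shift y j).
Proof.
move=> ht; have /andP[/negbTE t_odd /negbTE t_H] :
    ((val t).+1 \notin [:: 1; 3; 5; 7]%N) && ((val t).+1 \notin [:: 2; 8]%N).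
  by move: ht; rewrite !inE => /orP[] /eqP->.
rewrite /psi0 t_odd t_H /=.
under eq_bigr do rewrite -mulrA.
rewrite (sum_Hent_delta _ _ (fun y => _ * omega (phase_shift y j))).
by rewrite -Tent_omega /HTent; ring.
Qed.

Lemma psi0_label5 z z' j :
  psi0 z (z', label5, j) = \sum_y Hent z' y * psi0 z (y, label2, j).
Proof.
transitivity (\sum_y Hent z' y * Hent y z / sqrtC 8%:R * omega j).
  by rewrite -!mulr_suml Hent_involutive /psi0 /=; case: eqP.
by apply: eq_bigr => y _; rewrite /psi0 /= !mulrA.
Qed.

Lemma psi0_phase4 z (v : V0) : psi0 z (v.1, phase4) = - psi0 z (v.1, phase0).
Proof.
by case: v => -[z' t] j; rewrite /psi0 /omega /= conj_zeta_expr4 expr0; ring.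
Qed.

Definition psi_span (f : V0 -> algC) : bool := (rowf f <= psi_mx)%MS.

Lemma psi_span_relation (I : finType) (h : I -> algC) v (w : I -> V0) :
  (forall i, (h i)^* = h i) ->
  (forall z, psi0 z v = \sum_i h i * psi0 z (w i)) ->
  forall f, psi_span f -> f v = \sum_i h i * f (w i).
Proof.
move=> h_real psi0_rel f /submxP[D fD].
have fE u : f u = \sum_k D 0 k * psi_mx k (enum_rank u).
  by rewrite -(rowfK f u) fD /frow mxE.
have psi_rel k :
    psi_mx k (enum_rank v) = \sum_i h i * psi_mx k (enum_rank (w i)).
  rewrite mxE enum_rankK; under eq_bigr do rewrite mxE enum_rankK.
  case: k => -[|[|[|k]]] _ //=; rewrite /psi1 psi0_rel rmorph_sum;
    by apply: eq_bigr => i _; rewrite rmorphM /= h_real.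
rewrite fE; under eq_bigr do rewrite psi_rel mulr_sumr.
rewrite exchange_big; apply: eq_bigr => i _.
by rewrite fE mulr_sumr; apply: eq_bigr => k _; rewrite mulrCA.
Qed.

Lemma psi_span_relation1 (a : algC) v w : a^* = a ->
  (forall z, psi0 z v = a * psi0 z w) ->
  forall f, psi_span f -> f v = a * f w.
Proof.
move=> a_real psi0_rel f fspan.
have rel := @psi_span_relation _ (fun _ : 'I_1 => a) v (fun _ => w) (fun=> a_real).
rewrite (rel _ f fspan) ?big_ord1 // => z.
by rewrite big_ord1.
Qed.

Lemma normC_Hent_comb_le z (g : 'I_2 -> algC) :
  `|\sum_y Hent z y * g y| ^+ 2 <= \sum_y `|g y| ^+ 2.
Proof.
rewrite !big_ord_recl !big_ord0 !addr0; apply: le_trans (normCD_sqr_le _ _) _.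
rewrite (normrM (Hent z ord0)) (normrM (Hent z (lift ord0 ord0))) !exprMn.
rewrite !normC2_Hent -mulrDr mulrA mulfV ?pnatr_eq0 //.
by rewrite mul1r.
Qed.

Definition nonnode (u : glabel) (v : V0) : bool := (val v.1.2).+1 \notin tset u.

Definition nonnode_mass (u : glabel) (f : V0 -> algC) : algC :=
  \sum_(v | nonnode u v) `|f v| ^+ 2.

Section NonnodeMass.
Variable f : V0 -> algC.

Lemma nonnode_mass_ge_entry u v : nonnode u v -> `|f v| ^+ 2 <= nonnode_mass u f.
Proof.
move=> v_nonnode; rewrite /nonnode_mass (bigD1 v) //= lerDl.
by apply: sumr_ge0 => ? _; rewrite exprn_ge0.
Qed.

Lemma nonnode_mass_ge_Hent_comb u z t (j : 'I_2 -> 'I_8) :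
  (val t).+1 \notin tset u ->
  `|\sum_y Hent z y * f (y, t, j y)| ^+ 2 <= nonnode_mass u f.
Proof.
move=> t_nonnode; apply: le_trans (normC_Hent_comb_le _ _) _.
rewrite !big_ord_recl big_ord0 addr0 /nonnode_mass.
rewrite (bigD1 (ord0, t, j ord0)) //= (bigD1 (lift ord0 ord0, t, j (lift ord0 ord0))) /=.
  by rewrite lerD2l lerDl; apply: sumr_ge0 => ? _; rewrite exprn_ge0.
by rewrite /nonnode /= t_nonnode.
Qed.

Hypothesis fspan : psi_span f.

(* Each entry of a vector in the span of the psi's is bounded by its entries
   outside the nodes of any label u: node entries are reached from label 5 or
   label 2 through one Hadamard step. *)
Lemma odd_label_entry_le u z t j : (val t).+1 \in [:: 1; 3; 5; 7]%N ->
  `|f (z, t, j)| ^+ 2 <= nonnode_mass u f.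
Proof.
move=> t_odd.
rewrite (@psi_span_relation1 1 _ (z, label5, j) (rmorph1 _)) //; last first.
  by move=> z'; rewrite mul1r psi0_odd_label.
rewrite mul1r; case: u.
- rewrite (psi_span_relation (Hent_conj z) (fun z' => psi0_label5 z' z j)) //.
  exact: nonnode_mass_ge_Hent_comb.
- exact: nonnode_mass_ge_entry.
- exact: nonnode_mass_ge_entry.
Qed.

Lemma H_label_entry_le u z t j : (val t).+1 \in [:: 2; 8]%N ->
  `|f (z, t, j)| ^+ 2 <= nonnode_mass u f.
Proof.
move=> t_H; case: u;
  try by apply: nonnode_mass_ge_entry; move: t_H; rewrite /nonnode !inE => /orP[] /eqP->.
rewrite (psi_span_relation (Hent_conj z) (fun z' => psi0_H_label z' z j t_H)) //.
exact: nonnode_mass_ge_Hent_comb.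
Qed.

Lemma HT_label_entry_le u z t j : (val t).+1 \in [:: 4; 6]%N ->
  `|f (z, t, j)| ^+ 2 <= nonnode_mass u f.
Proof.
move=> t_HT; case: u;
  try by apply: nonnode_mass_ge_entry; move: t_HT; rewrite /nonnode !inE => /orP[] /eqP->.
rewrite (psi_span_relation (Hent_conj z) (fun z' => psi0_HT_label z' z j t_HT)) //.
exact: nonnode_mass_ge_Hent_comb.
Qed.

Lemma psi_span_entry_le u v : `|f v| ^+ 2 <= nonnode_mass u f.
Proof.
case: v => -[z [[|[|[|[|[|[|[|[|//]]]]]]]] ?]] j;
  by [apply: odd_label_entry_le | apply: H_label_entry_le | apply: HT_label_entry_le].
Qed.

Lemma psi_span_mass_le u : \sum_v `|f v| ^+ 2 <= 128%:R * nonnode_mass u f.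
Proof.
apply: le_trans (_ : _ <= \sum_(v : V0) nonnode_mass u f) _.
  by apply: ler_sum => v _; apply: psi_span_entry_le.
by rewrite sumr_const !card_prod !card_ord mulr_natl.
Qed.

End NonnodeMass.

Section GateGraph.
Variables (A0 : rel V0) (R : nat) (S : {set Trip R}) (E : {set {set Trip R}}).
Hypothesis A0sym : symmetric A0.

Definition g0_shift (v w : V0) : algC := (A0 v w)%:R - (v == w)%:R * e1.

Definition gate_shift (v w : VG R) : algC := AG_fun A0 S E v w - (v == w)%:R * e1.

Definition hterm (v w : VG R) : algC :=
  if jof v == jof w then
    (if (trip_of v == trip_of w) && (trip_of v \in S) then 1 else 0)
    + #|[set e in E | (trip_of v \in e) && (trip_of w \in e)]|%:R
  else 0.

Lemma gate_shiftE v w :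
  gate_shift v w = (v.1 == w.1)%:R * g0_shift v.2 w.2 + hterm v w.
Proof.
rewrite /gate_shift /AG_fun /g0_shift -/(hterm v w).
case: v w => [q v] [q' w] /=; rewrite xpair_eqE.
by case: (q == q'); rewrite /= ?mul1r ?mul0r ?add0r ?mulr0 ?subr0; ring.
Qed.

Lemma g0_shift_conj v w : (g0_shift w v)^* = g0_shift v w.
Proof. by rewrite /g0_shift rmorphB rmorphM !rmorph_nat /= e1_conj A0sym eq_sym. Qed.

Definition node_key (c : Trip R + {set Trip R}) (x : Trip R) : bool :=
  match c with
  | inl y => (y \in S) && (x == y)
  | inr e => (e \in E) && (x \in e)
  end.

Lemma hterm_keys v w : hterm v w =
  \sum_(j : 'I_8) \sum_c
     ((node_key c (trip_of v) && (jof v == j)) &&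
      (node_key c (trip_of w) && (jof w == j)))%:R.
Proof.
rewrite /hterm.
case: eqP => [<-|jvw]; last first.
  apply/esym/big1 => j _; apply: big1 => c _.
  case: (jof v =P j) => [jv|]; rewrite ?andbF //.
  by case: (jof w =P j) => [jw|]; rewrite ?andbF //; case: jvw; rewrite jv jw.
rewrite (bigD1 (jof v)) //= [X in _ = _ + X]big1 ?addr0; last first.
  by move=> j /negbTE jv; apply: big1 => c _; rewrite eq_sym jv !andbF.
rewrite big_sumType /=; congr (_ + _).
  rewrite (bigD1 (trip_of v)) //= big1 ?addr0; last first.
    by move=> y /negbTE yv; rewrite [_ == y]eq_sym yv andbF.
  rewrite !eqxx !andbT [trip_of v == _]eq_sym.
  by case: (trip_of v \in S); case: (trip_of w == trip_of v).
rewrite -sumr_const big_mkcond /=; apply: eq_bigr => e _.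
by rewrite !inE !eqxx !andbT; case: (e \in E); case: (_ \in e); case: (_ \in e).
Qed.

Lemma hterm_conj v w : (hterm w v)^* = hterm v w.
Proof.
rewrite !hterm_keys rmorph_sum; apply: eq_bigr => j _.
by rewrite rmorph_sum; apply: eq_bigr => c _; rewrite rmorph_nat andbC.
Qed.

Lemma gate_shift_conj v w : (gate_shift w v)^* = gate_shift v w.
Proof.
by rewrite !gate_shiftE rmorphD rmorphM rmorph_nat /= g0_shift_conj hterm_conj eq_sym.
Qed.

Lemma hterm_hform_ge0 f : 0 <= hform hterm f.
Proof.
apply: (hform_gram_ge0 (key := fun k x => node_key k.2 (trip_of x) && (jof x == k.1))).
by move=> v w; rewrite hterm_keys pair_bigA.
Qed.

Lemma hform_gate_shift f :
  hform gate_shift f = \sum_q hform g0_shift (fun v => f (q, v)) + hform hterm f.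
Proof. by rewrite (hformD f gate_shiftE) hform_blockdiag. Qed.

Hypotheses (A0min : smallest_eig (adjmx A0) e1)
           (A0eig : (eigenspace (adjmx A0) e1 == psi_mx)%MS).

Lemma adjmx_shift : adjmx A0 - e1%:M = fmx g0_shift.
Proof. exact: fmx_sub_scalar. Qed.

Lemma g0_shift_psd b : eigenvalue (fmx g0_shift) b -> 0 <= b.
Proof. by rewrite -adjmx_shift; apply: smallest_eig_shift_ge0. Qed.

Lemma g0_kernel_psi_span f :
  (forall w, \sum_v f v * g0_shift v w = 0) -> psi_span f.
Proof.
move=> f_ker; rewrite /psi_span -(eqmxP A0eig); apply/sub_kermxP.
by rewrite adjmx_shift rowf_mul; apply/rowP => i; rewrite !mxE f_ker.
Qed.

Lemma gate_kernel_psi_span a : (forall w, \sum_v a v * gate_shift v w = 0) ->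
  forall q, psi_span (fun v => a (q, v)).
Proof.
move=> a_ker q; apply: g0_kernel_psi_span.
have block_ge0 q' : 0 <= hform g0_shift (fun v => a (q', v)).
  exact: hform_ge0 g0_shift_conj _ g0_shift_psd.
have : hform gate_shift a = 0 by apply: big1 => w _; rewrite a_ker mul0r.
rewrite hform_gate_shift => /eqP; rewrite paddr_eq0 ?hterm_hform_ge0 ?sumr_ge0 //.
case/andP => /eqP /(psumr_eq0P (fun q' _ => block_ge0 q')) blocks0 _.
exact: hform_eq0 g0_shift_conj _ g0_shift_psd (blocks0 q isT).
Qed.

Variable U : 'I_R -> glabel.
Hypothesis gd : gate_diagram U S E.

Lemma nonnode_inN q v : nonnode (U q) v -> inN S E (q, v).
Proof.
case: v => -[z t] j; rewrite /nonnode /inN /= => /negbTE t_nonnode.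
case: gd => S_nodes E_nodes _; apply/andP; split.
  by apply/negP => /S_nodes; rewrite /is_node /= t_nonnode.
apply/forallP => e; apply/implyP => eE; apply/negP => /((E_nodes e eE).2).
by rewrite /is_node /= t_nonnode.
Qed.

Lemma gate_kernel_mass_le a : (forall w, \sum_v a v * gate_shift v w = 0) ->
  \sum_v `|a v| ^+ 2 <= 128%:R * \sum_v (inN S E v)%:R * `|a v| ^+ 2.
Proof.
move=> a_ker; rewrite sum_pair [X in _ <= _ * X]sum_pair mulr_sumr.
apply: ler_sum => q _.
apply: le_trans (psi_span_mass_le (gate_kernel_psi_span a_ker q) (U q)) _.
rewrite ler_wpM2l // /nonnode_mass big_mkcond /=; apply: ler_sum => v _.
case: ifP => [/nonnode_inN -> | _]; first by rewrite mul1r.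
by rewrite mulr_ge0 ?exprn_ge0.
Qed.

End GateGraph.

Lemma gap_combination (K G g t A B : algC) : 0 < K -> 0 <= g -> g <= G ->
  0 <= B -> g * B <= t -> A / K - 2%:R * B <= t ->
  g * (A + B) <= (K * G + (2%:R * K + 1)) * t.
Proof.
move=> K0 g0 gG B0 gB At.
have t0 : 0 <= t by apply: le_trans gB; rewrite mulr_ge0.
have AB_le : A + B <= K * t + (2%:R * K + 1) * B.
  have -> : K * t + (2%:R * K + 1) * B = (t + 2%:R * B) * K + B by ring.
  by rewrite lerD2r -ler_pdivrMr // -lerBlDr.
apply: le_trans (ler_wpM2l g0 AB_le) _.
set c := 2%:R * K + 1; have c0 : 0 <= c by rewrite addr_ge0 ?mulr_ge0 ?ltW.
rewrite mulrDr [leRHS]mulrDl mulrCA [g * (c * B)]mulrCA -mulrA.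
apply: lerD; apply: ler_wpM2l => //; first exact: ltW.
exact: ler_wpM2r.
Qed.

Section GateGraphGap.
Variables (A0 : rel V0) (R : nat) (U : 'I_R -> glabel) (S : {set Trip R})
  (E : {set {set Trip R}}).
Hypotheses (A0sym : symmetric A0) (A0irr : irreflexive A0)
  (A0min : smallest_eig (adjmx A0) e1)
  (A0eig : (eigenspace (adjmx A0) e1 == psi_mx)%MS)
  (gd : gate_diagram U S E).

Local Notation M := (gate_shift A0 S E).

Lemma AG_fun_diag_le1 v : AG_fun A0 S E v v <= 1.
Proof.
rewrite /AG_fun !eqxx A0irr add0r.
have -> : [set e in E | (trip_of v \in e) && (trip_of v \in e)] =
          [set e in E | trip_of v \in e].
  by apply/setP => e; rewrite !inE andbb.
case: gd => _ _ /(_ (trip_of v)); rewrite -(ler_nat algC) natrD.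
by case: (trip_of v \in S).
Qed.

Lemma AG_fun_phase_le1 v w : jof v != jof w -> AG_fun A0 S E v w <= 1.
Proof.
move=> /negbTE jvw; rewrite /AG_fun jvw addr0.
by case: ifP => _; rewrite ?ler01 // -[leRHS]/(1%:R) ler_nat leq_b1.
Qed.

Lemma gate_gap_le16 (g : algC) : 0 <= g ->
  (forall b, eigenvalue (fmx M) b -> b != 0 -> g <= b) ->
  eigenvalue (fmx M) g -> g <= 16%:R.
Proof.
move=> g0 gapM /eigenvalue_fmxP[x /existsP[[q [[z t] j]] _] _].
pose v1 : VG R := (q, (z, t, phase0)); pose v2 : VG R := (q, (z, t, phase4)).
(* kernel vectors are psi-combinations on block q, where phase 4 is minus phase 0 *)
have ker_antisym a : (forall w, \sum_v a v * M v w = 0) -> a v2 = - a v1.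
  move=> a_ker; rewrite -mulN1r.
  apply: (psi_span_relation1 _ _ (gate_kernel_psi_span A0sym A0min A0eig a_ker q)).
  - by rewrite rmorphN rmorph1.
  - by move=> z'; rewrite mulN1r (psi0_phase4 z' (z, t, j)).
have diag w : M w w <= 1 - e1.
  by rewrite /gate_shift eqxx mul1r lerD2r AG_fun_diag_le1.
have off w w' : jof w != jof w' -> M w w' <= 1.
  move=> jww; rewrite /gate_shift (_ : (w == w') = false).
    by rewrite mul0r subr0 AG_fun_phase_le1.
  by apply: contraNF jww => /eqP->.
have v12 : v1 != v2 by rewrite !xpair_eqE /= !andbF.
have := hform_gap_two_point (gate_shift_conj S E A0sym) v12 g0 gapM ker_antisym.
move=> /le_trans /(_ (lerD (lerD (diag v1) (off v2 v1 isT))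
                          (lerD (off v1 v2 isT) (diag v2)))).
have -> : 1 - e1 + 1 + (1 + (1 - e1)) = 6%:R + 6%:R * sqrtC 2%:R.
  by rewrite /e1; ring.
move=> /le_trans /(_ (lerD (lexx _) (ler_wpM2l (ler0n _ 6) sqrtC2_le2))).
rewrite -(mulr_natr g) -natrM -natrD => g2_le.
by rewrite -(ler_pM2r (ltr0n _ 2)) (le_trans g2_le) // -natrM ler_nat.
Qed.

Lemma symmetric_sector_gap (g b : algC) : 0 <= g ->
  (forall b, eigenvalue (fmx M) b -> b != 0 -> g <= b) -> g <= 16%:R ->
  eigenvalue (fmx (fun v w => M v w + (v == w)%:R * (2%:R * (inN S E v)%:R))) b ->
  g <= 2305%:R * b.
Proof.
move=> g0 gapM g16 /eigenvalue_fmxP[x /existsP[v0 xv0] /hform_eigen_diag x_eig].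
have [a a_ker [a_perp gap_le]] := hform_gap_split (gate_shift_conj S E A0sym) x g0 gapM.
have XAB := fdot_pythagoras a_perp.
rewrite !fdot_normE in XAB gap_le.
set X := \sum_v `|x v| ^+ 2 in XAB x_eig; set A := \sum_v `|a v| ^+ 2 in XAB.
set B := \sum_v `|x v - a v| ^+ 2 in XAB gap_le.
have B_ge0 : 0 <= B by apply: sumr_ge0 => v _; rewrite exprn_ge0.
have hform_ge0 : 0 <= hform M x := le_trans (mulr_ge0 g0 B_ge0) gap_le.
set NX := \sum_v (inN S E v)%:R * `|x v| ^+ 2.
have NX_ge0 : 0 <= NX by apply: sumr_ge0 => v _; rewrite mulr_ge0 ?exprn_ge0.
have eig_NX : hform M x + 2%:R * NX = b * X.
  rewrite -x_eig /NX mulr_sumr; congr (_ + _).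
  by apply: eq_bigr => w _; rewrite mulrA.
have gB : g * B <= b * X.
  by rewrite -eig_NX (le_trans gap_le) // lerDl mulr_ge0.
have AB : A / 128%:R - 2%:R * B <= b * X.
  rewrite -eig_NX; apply: ler_wpDl hform_ge0 _.
  apply: le_trans (ler_wpM2l (ler0n _ 2) (indicator_mass_le (inN S E) a x)).
  rewrite mulrBr lerD2r mulrCA mulfV ?pnatr_eq0 // mulr1.
  rewrite ler_pdivrMr ?ltr0n // mulrC.
  by have := gate_kernel_mass_le A0sym A0min A0eig gd a_ker.
have X_gt0 : 0 < X.
  rewrite /X (bigD1 v0) //= ltr_wpDr ?sumr_ge0 // => [v _|]; first exact: exprn_ge0.
  by rewrite exprn_gt0 ?normr_gt0.
have := gap_combination (ltr0n _ 128) g0 g16 B_ge0 gB AB.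
rewrite -XAB mulrA ler_pM2r // => /le_trans; apply.
by rewrite -!natrM natr1 -natrD.
Qed.

End GateGraphGap.

(* 2 Pi_+ is the all-ones matrix on the two sheets. *)
Lemma ASL_shiftE (A0 : rel V0) R (S : {set Trip R}) (E : {set {set Trip R}})
    v s w s' :
  ASL_fun A0 S E (v, s) (w, s') - ((v, s) == (w, s'))%:R * e1 =
  (s == s')%:R * gate_shift A0 S E v w + (v == w)%:R * (inN S E v)%:R.
Proof.
rewrite /ASL_fun /gate_shift /= xpair_eqE (_ : 2%:R * (1 / 2%:R) = 1 :> algC).
  by case: (s == s'); case: (v == w); case: (inN S E v); rewrite /=; ring.
by rewrite mul1r mulfV ?pnatr_eq0.
Qed.

Theorem lemma2 (A0 : rel V0) (A0sym : symmetric A0) (A0irr : irreflexive A0)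
    (A0min : smallest_eig (adjmx A0) e1)
    (A0eig : (eigenspace (adjmx A0) e1 == psi_mx)%MS) :
  exists C : algC, 0 < C /\
    forall (R : nat) (U : 'I_R -> glabel) (S : {set Trip R})
           (E : {set {set Trip R}}),
      gate_diagram U S E ->
      smallest_eig (AG A0 S E) e1 ->
      forall g gSL : algC,
        is_gamma (AG A0 S E - e1%:M) g ->
        is_gamma (ASL A0 S E - e1%:M) gSL ->
        C * g <= gSL.
Proof.
exists 2305%:R^-1; split; first by rewrite invr_gt0 ltr0n.
move=> R U S E gd AGmin g gSL [g_eig _ g_min] [gSL_eig gSL_n0 _].
have g0 : 0 <= g := smallest_eig_shift_ge0 AGmin g_eig.
rewrite fmx_sub_scalar in g_eig g_min.
have g16 := gate_gap_le16 A0sym A0irr A0min A0eig gd g0 g_min g_eig.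
rewrite mulrC ler_pdivrMr ?ltr0n // mulrC.
rewrite fmx_sub_scalar in gSL_eig.
case: (doubled_eigenvalue (@ASL_shiftE A0 R S E) gSL_eig) => [antisym | sym].
  apply: le_trans (g_min _ antisym gSL_n0) _.
  by rewrite ler_peMl ?(le_trans g0 (g_min _ antisym gSL_n0)) // ler1n.
by apply: (symmetric_sector_gap A0sym A0min A0eig gd g0 g_min g16); apply: sym.
Qed.
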